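(* Let $\mathbb{F}$ be an arbitrary field. Let $P(t,y)\in\mathbb{F}[[t,y]]$ and $\varphi(t)\in\mathbb{F}[[t]]$ satisfy $\varphi(0)=0$, $P(t,\varphi(t))=0$ and $\partial_y P(0,0)=\alpha\neq 0$. Then $$\varphi(t) = \sum_{m\ge 1}\frac{1}{\alpha^{m+1}}\,[y^{m-1}]\Big(\partial_yP(t,y)\cdot(\alpha y - P(t,y))^m\Big).$$ If moreover $\mathbb{F}$ has characteristic zero, then also $$\varphi(t) = \sum_{m\ge 1}\frac{1}{m\,\alpha^{m}}\,[y^{m-1}]\Big((\alpha y - P(t,y))^m\Big).$$ (Both sums converge in the $t$-adic topology of $\mathbb{F}[[t]]$.)
   Context: For a power series $G(t,y)\in\mathbb{F}[[t,y]]$, $[y^a](G)\in\mathbb{F}[[t]]$ denotes the coefficient of $y^a$ when $G$ is viewed as a power series in $y$ with coefficients in $\mathbb{F}[[t]]$. *)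

From mathcomp Require Import all_boot all_algebra.
Set Implicit Arguments. Unset Strict Implicit. Unset Printing Implicit Defensive.
Import GRing.Theory.
Local Open Scope ring_scope.

Definition ps (F : fieldType) := nat -> F.
(* Formal power series in t,y: P i j = coefficient of t^i y^j. *)
Definition ps2 (F : fieldType) := nat -> nat -> F.

Section PS.
Variable F : fieldType.

Definition ps_one : ps F := fun n => if n == 0%N then 1 else 0.
Definition ps_mul (f g : ps F) : ps F :=
  fun n => \sum_(k < n.+1) f k * g (n - k)%N.
Fixpoint ps_pow (f : ps F) (m : nat) : ps F :=
  if m is m'.+1 then ps_mul f (ps_pow f m') else ps_one.
Definition ps_scale (c : F) (f : ps F) : ps F := fun n => c * f n.

Definition ps2_one : ps2 F := fun i j => if (i == 0%N) && (j == 0%N) then 1 else 0.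
Definition ps2_mul (P Q : ps2 F) : ps2 F :=
  fun i j => \sum_(a < i.+1) \sum_(b < j.+1) P a b * Q (i - a)%N (j - b)%N.
Fixpoint ps2_pow (P : ps2 F) (m : nat) : ps2 F :=
  if m is m'.+1 then ps2_mul P (ps2_pow P m') else ps2_one.
Definition ps2_sub (P Q : ps2 F) : ps2 F := fun i j => P i j - Q i j.
Definition ps2_cy (c : F) : ps2 F :=
  fun i j => if (i == 0%N) && (j == 1%N) then c else 0.
Definition ps2_dy (P : ps2 F) : ps2 F := fun i j => P i j.+1 *+ j.+1.
Definition ps2_coefy (a : nat) (P : ps2 F) : ps F := fun i => P i a.

(* P(t, phi(t)) = sum_j ([y^j]P)(t) * phi(t)^j; when phi(0) = 0 only j <= n
   contribute to the coefficient of t^n, so the sum is truncated. *)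
Definition ps2_subst (P : ps2 F) (phi : ps F) : ps F :=
  fun n => \sum_(j < n.+1) ps_mul (ps2_coefy j P) (ps_pow phi j) n.

(* t-adic convergence of sum_{m >= 1} f m to s: for every n, the partial
   sums eventually agree with s modulo t^(n+1). *)
Definition tadic_sum_from1 (f : nat -> ps F) (s : ps F) : Prop :=
  forall n, exists M, forall N, (M <= N)%N ->
    forall k, (k <= n)%N -> \sum_(1 <= m < N.+1) f m k = s k.

End PS.

(* Truncating [P] and [phi] gives polynomials [p] in [y] over [F[t]] and [f]
   with [p(f) = 0 mod t^(n+1)].  With [q = alpha y - p], the finite geometric
   sum [S = sum_(m <= N) (alpha y)^(N-m) q^m] satisfies
   [p S = (alpha y)^(N+1) - q^(N+1)], and every monomial [t^i y^j] of
   [q^(N+1)] has [2i + j >= 2N + 2]; so in low degrees [S] is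
   [(alpha y)^(N+1) / p], and [[y^(N-1)] (p' S)] is [alpha^(N+1)] times the
   residue of [y p'/p], namely [alpha^(N+1) f].  To see this, factor
   [p - p(f) = V (y - f)]: in [p' S = V' (y - f) S + V S] the first term
   vanishes because [V(0,0) = alpha] is invertible, and the second is obtained
   by dividing [(alpha y)^(N+1)] by [y - f].  Expanding [S] gives the first
   formula; the second follows by Abel summation from [p' = alpha - q'] and
   [(m+1) [y^(m-1)] (q' q^m) = m [y^m] q^(m+1)]. *)

From mathcomp Require Import all_boot all_algebra.
From mathcomp Require Import zify ring.
Set Implicit Arguments. Unset Strict Implicit. Unset Printing Implicit Defensive.
Import GRing.Theory.
Local Open Scope ring_scope.

Lemma dvdp_XnP (F : fieldType) k (a : {poly F}) :
  reflect (forall i, (i < k)%N -> a`_i = 0) ('X^k %| a).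
Proof.
rewrite /dvdp -Pdiv.IdomainMonic.take_poly_modp ?monicXn.
apply: (iffP eqP) => [ak0 i ik | a_low].
  by have := coef_take_poly k a i; rewrite ik ak0 coef0.
by apply/polyP => i; rewrite coef_take_poly coef0; case: ifP => // /a_low.
Qed.

Lemma dvdpX_coef0 (F : fieldType) (a : {poly F}) : ('X %| a) = (a`_0 == 0).
Proof. by rewrite -[X in X %| _]subr0 -polyC0 dvdp_XsubCl /root horner_coef0. Qed.

Lemma dvdp_sum (F : fieldType) I (r : seq I) (P : pred I) (G : I -> {poly F}) d :
  (forall i, P i -> d %| G i) -> d %| \sum_(i <- r | P i) G i.
Proof. by move=> dG; elim/big_rec: _ => [|i x Pi dx]; rewrite ?dvdp0 ?dvdp_add ?dG. Qed.

Lemma coprimep_Xn (F : fieldType) k (v : {poly F}) : v`_0 != 0 -> coprimep 'X^k v.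
Proof.
by move=> v0; apply: coprimep_expl; rewrite coprimep_sym coprimepX /root horner_coef0.
Qed.

Lemma dvdp_coef_cancel (F : fieldType) (d : {poly F}) (V X : {poly {poly F}}) L :
  coprimep d V`_0 -> (forall j, (j <= L)%N -> d %| (V * X)`_j) ->
  forall j, (j <= L)%N -> d %| X`_j.
Proof.
move=> dV dVX; elim/ltn_ind => j IH jL.
have d_tail : d %| \sum_(i < j) V`_(lift ord0 i) * X`_(j - lift ord0 i).
  by apply: dvdp_sum => i _; apply/dvdp_mull/IH; have := ltn_ord i; rewrite lift0; lia.
by have := dVX j jL; rewrite coefM big_ord_recl subn0 dvdp_addl // (Gauss_dvdpr _ dV).
Qed.

(* Iterates [T_j = ((X - f) T)_(j+1) + f T_(j+1)]. *)
Lemma coef_of_mul_XsubC (R : comNzRingType) (f : R) (T : {poly R}) K j :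
  T`_j = \sum_(k < K) f ^+ k * (('X - f%:P) * T)`_(j.+1 + k) + f ^+ K * T`_(j + K).
Proof.
have coefY i : (('X - f%:P) * T)`_i.+1 = T`_i - f * T`_i.+1.
  by rewrite mulrBl coefB coefXM coefCM.
elim: K j => [|K IH] j; first by rewrite big_ord0 add0r expr0 mul1r addn0.
rewrite IH big_ord_recr -addrA; congr (_ + _).
rewrite addSn coefY addnS exprS; ring.
Qed.

Lemma dvdp_coef_of_mul_XsubC (F : fieldType) (d f : {poly F}) (T : {poly {poly F}}) K j :
  d %| f ^+ K -> (forall k, (k < K)%N -> d %| (('X - f%:P) * T)`_(j.+1 + k)) ->
  d %| T`_j.
Proof.
move=> dfK dYT; rewrite (coef_of_mul_XsubC f T K j).
by rewrite dvdp_add ?dvdp_mulr // dvdp_sum // => k _; rewrite dvdp_mull ?dYT.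
Qed.

Lemma coef_horner_Xdvd (F : fieldType) (p : {poly {poly F}}) (f : {poly F}) i :
  'X %| f -> (p.[f])`_i = \sum_(j < i.+1) (p`_j * f ^+ j)`_i.
Proof.
move=> Xf; rewrite (horner_coef_wide _ (leq_maxl (size p) i.+1)) coef_sum.
rewrite [RHS](big_ord_widen _ (fun j => (p`_j * f ^+ j)`_i) (leq_maxr (size p) i.+1)).
rewrite [RHS]big_mkcond; apply: eq_bigr => j _; case: ltnP => // ij.
have : 'X^j %| p`_j * f ^+ j by rewrite dvdp_mull // dvdp_exp2r.
by move/dvdp_XnP; apply.
Qed.

(* The outer variable of [{poly {poly R}}] is [y], the inner one [t];
   [weight_geq r w]: every monomial [t^i y^j] of [r] has [2 i + j >= w]. *)
Definition weight_geq (R : nzRingType) (r : {poly {poly R}}) (w : nat) :=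
  forall i j, (2 * i + j < w)%N -> r`_j`_i = 0.

Lemma weight_geqM (R : nzRingType) (r s : {poly {poly R}}) w1 w2 :
  weight_geq r w1 -> weight_geq s w2 -> weight_geq (r * s) (w1 + w2).
Proof.
move=> wr ws i j ij; rewrite coefM coef_sum big1 // => -[b hb] _ /=.
rewrite coefM big1 // => -[a ha] _ /=.
by case: (ltnP (2 * a + b) w1) => ab; [rewrite wr ?mul0r | rewrite ws ?mulr0 //; lia].
Qed.

Lemma weight_geqX (R : nzRingType) (r : {poly {poly R}}) w m :
  weight_geq r w -> weight_geq (r ^+ m) (w * m).
Proof.
move=> wr; elim: m => [|m IH]; first by move=> i j; rewrite muln0.
by rewrite exprS mulnS; apply: weight_geqM.
Qed.

Lemma weight_geq_dvdp (F : fieldType) (r : {poly {poly F}}) w n j :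
  weight_geq r w -> (2 * n + j < w)%N -> 'X^(n.+1) %| r`_j.
Proof. by move=> wr nj; apply/dvdp_XnP => i ni; apply: wr; lia. Qed.

Lemma sum_nat_mulrn_diff (V : zmodType) (b : nat -> V) N :
  \sum_(1 <= m < N.+1) (b m - b m.+1) *+ m = \sum_(1 <= m < N.+1) b m - b N.+1 *+ N.
Proof.
elim: N => [|N IH]; first by rewrite !big_geq // mulr0n subr0.
rewrite [LHS]big_nat_recr // [in RHS]big_nat_recr //= IH.
by rewrite mulrnBl [b N.+1 *+ N.+1]mulrSr -!addrA addKr.
Qed.

Section FiniteLagrange.
Variables (F : fieldType) (n N : nat) (alpha : F).
Variables (p : {poly {poly F}}) (f : {poly F}).
Hypotheses (Xf : 'X %| f) (pf : 'X^(n.+1) %| p.[f]) (p10 : p`_1`_0 = alpha).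
Hypotheses (alpha_neq0 : alpha != 0) (N_large : (3 * n + 2 <= N)%N).

Local Notation ay := ((alpha%:P)%:P * 'X).
Local Notation q := (ay - p).
Let S := \sum_(m < N.+1) ay ^+ (N - m) * q ^+ m.

Lemma p00 : p`_0`_0 = 0.
Proof.
by move/dvdp_XnP: pf => /(_ 0%N erefl); rewrite coef_horner_Xdvd // big_ord1 expr0 mulr1.
Qed.

Lemma weight_geq_q : weight_geq q 2.
Proof.
move=> i j ij; have -> : i = 0%N by lia.
case: j ij => [|[|j]] ij; last lia.
  by rewrite coefB coefCM coefX mulr0 coefB coef0 p00 subrr.
by rewrite coefB coefCM coefX mulr1 coefB coefC p10 subrr.
Qed.

Lemma exp_ay k : ay ^+ k = ((alpha ^+ k)%:P)%:P * 'X^k.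
Proof. by rewrite exprMn -!rmorphXn. Qed.

Lemma mul_p_S : p * S = ay ^+ N.+1 - q ^+ N.+1.
Proof. by rewrite subrXX subKr. Qed.

Lemma coef_deriv_S :
  (p^`() * S)`_N.-1 =
  \sum_(1 <= m < N.+1) (alpha ^+ (N - m))%:P * (p^`() * q ^+ m)`_m.-1.
Proof.
have termE m : (p^`() * (ay ^+ (N - m) * q ^+ m))`_N.-1 =
    (alpha ^+ (N - m))%:P *
    (if (N.-1 < N - m)%N then 0 else (p^`() * q ^+ m)`_(N.-1 - (N - m))).
  by rewrite exp_ay mulrCA -mulrA coefCM coefXnM.
rewrite mulr_sumr coef_sum big_ord_recl termE ifT; last by rewrite subn0; lia.
rewrite mulr0 add0r big_add1 big_mkord; apply: eq_bigr => m _.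
have mN := ltn_ord m.
by rewrite lift0 termE ifF; [congr (_ * _`__); rewrite /=; lia | apply/negbTE; lia].
Qed.

Section Factorization.
Variable V : {poly {poly F}}.
Hypothesis pV : p - (p.[f])%:P = V * ('X - f%:P).

Local Notation Y := ('X - f%:P).
Let rest := q ^+ N.+1 + (p.[f])%:P * S.

Lemma dvdp_coef_rest j : (j + 2 * n < 2 * N.+1)%N -> 'X^(n.+1) %| rest`_j.
Proof.
move=> jN; rewrite coefD coefCM dvdp_add ?dvdp_mulr //.
by apply: (weight_geq_dvdp (weight_geqX weight_geq_q)); lia.
Qed.

Lemma mul_V_YS : V * (Y * S) = ay ^+ N.+1 - rest.
Proof. by rewrite mulrA -pV mulrBl mul_p_S opprD addrA. Qed.

Lemma V00 : V`_0`_0 = alpha.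
Proof.
have f0 : f`_0 = 0 by apply/eqP; rewrite -dvdpX_coef0.
have := congr1 (fun r : {poly {poly F}} => r`_1`_0) pV.
rewrite /= mulrBr !coefB coefC /= coef0 subr0 p10.
by rewrite coefMX coefMC /= coefM big_ord1 f0 mulr0 subr0.
Qed.

Lemma dvdp_coef_YS j : (j <= N.-1)%N -> 'X^(n.+1) %| (Y * S)`_j.
Proof.
apply: (@dvdp_coef_cancel _ _ V); first by apply: coprimep_Xn; rewrite V00.
move=> i iN; rewrite mul_V_YS coefB exp_ay coefCM coefXn.
have -> : (i == N.+1) = false by apply/negbTE; lia.
by rewrite mulr0 sub0r dvdpNr dvdp_coef_rest //; lia.
Qed.

(* The exact quotient of [(alpha y)^(N+1)] by [y - f] has top terms
   [alpha^(N+1) G]; removing them from [V S] leaves a [T] such that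
   [(y - f) T] has no [y^j], [j >= N], modulo [t^(n+1)]. *)
Lemma dvdp_coef_VS : 'X^(n.+1) %| (V * S)`_N.-1 - (alpha ^+ N.+1)%:P * f.
Proof.
pose G := 'X^N + f%:P * 'X^(N.-1).
have XN : 'X^N = 'X * 'X^(N.-1) :> {poly {poly F}} by rewrite -exprS prednK //; lia.
have YG : Y * G = 'X^(N.+1) - (f ^+ 2)%:P * 'X^(N.-1).
  by rewrite /G exprS XN rmorphXn; ring.
pose T := V * S - ((alpha ^+ N.+1)%:P)%:P * G.
have YT : Y * T = ((alpha ^+ N.+1)%:P)%:P * (f ^+ 2)%:P * 'X^(N.-1) - rest.
  by rewrite /T mulrBr [Y * (V * S)]mulrCA mul_V_YS [Y * (_ * G)]mulrCA YG exp_ay; ring.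
have -> : (V * S)`_N.-1 - (alpha ^+ N.+1)%:P * f = T`_N.-1.
  rewrite /T coefB coefCM /G coefD coefXn coefCM coefXn eqxx mulr1.
  by rewrite (_ : (N.-1 == N) = false) ?add0r //; apply/negbTE; lia.
apply: (dvdp_coef_of_mul_XsubC (f := f) (K := n.+1)); first by rewrite dvdp_exp2r.
move=> k kn; rewrite prednK; last lia.
rewrite YT coefB coefMXn ifF; last by apply/negbTE; lia.
rewrite coefCM coefC ifF; last by apply/negbTE; lia.
by rewrite mulr0 sub0r dvdpNr dvdp_coef_rest //; lia.
Qed.

Lemma dvdp_coef_deriv_S : 'X^(n.+1) %| (p^`() * S)`_N.-1 - (alpha ^+ N.+1)%:P * f.
Proof.
have p'E : p^`() = V^`() * Y + V.
  have -> : p = V * Y + (p.[f])%:P by rewrite -pV subrK.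
  by rewrite derivD derivC addr0 derivM derivXsubC mulr1.
have dvdp_low : 'X^(n.+1) %| (V^`() * (Y * S))`_N.-1.
  by rewrite coefM dvdp_sum // => i _; rewrite dvdp_mull // dvdp_coef_YS // leq_subr.
by rewrite p'E mulrDl -mulrA coefD -addrA dvdp_addr ?dvdp_coef_VS.
Qed.

End Factorization.

Lemma lagrange_coef k : (k <= n)%N ->
  \sum_(1 <= m < N.+1) (alpha ^+ m.+1)^-1 * ((p^`() * q ^+ m)`_m.-1)`_k = f`_k.
Proof.
move=> kn; have [V pV] : exists V, p - (p.[f])%:P = V * ('X - f%:P).
  by apply/factor_theorem; rewrite /root hornerD hornerN hornerC subrr.
move/dvdp_XnP: (dvdp_coef_deriv_S pV) => /(_ k kn).
rewrite coefB coefCM coef_deriv_S coef_sum => /eqP; rewrite subr_eq0 => /eqP Sk.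
apply: (mulfI (expf_neq0 N.+1 alpha_neq0)); rewrite -Sk mulr_sumr.
apply: eq_big_nat => m /andP[m1 mN]; rewrite coefCM mulrA; congr (_ * _).
have -> : N.+1 = ((N - m) + m.+1)%N by lia.
by rewrite exprD mulfK // expf_neq0.
Qed.

Lemma lagrange_coef_pchar0 k : [pchar F] =i pred0 -> (k <= n)%N ->
  \sum_(1 <= m < N.+1) (m%:R * alpha ^+ m)^-1 * ((q ^+ m)`_m.-1)`_k = f`_k.
Proof.
move=> F0 kn; rewrite -(lagrange_coef kn).
pose c m := (m%:R * alpha ^+ m)^-1 * ((q ^+ m)`_m.-1)`_k.
have natS_neq0 m : (m.+1%:R : F) != 0 by move/pcharf0P: F0 => ->.
have cN : c N.+1 = 0 by rewrite /c (weight_geqX weight_geq_q) ?mulr0 //; lia.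
transitivity (\sum_(1 <= m < N.+1) (c m - c m.+1) *+ m).
  by rewrite sum_nat_mulrn_diff cN mul0rn subr0.
apply: eq_big_nat => m /andP[m1 _].
have p'E : p^`() = (alpha%:P)%:P - q^`().
  by rewrite derivB derivM derivX derivC mul0r add0r mulr1 subKr.
have q'E : m.+1%:R * ((q^`() * q ^+ m)`_m.-1)`_k = m%:R * ((q ^+ m.+1)`_m)`_k.
  have := coef_deriv (q ^+ m.+1) m.-1; rewrite deriv_exp prednK // coefMn.
  by move/(congr1 (fun r : {poly F} => r`_k)); rewrite !coefMn !mulr_natl; apply.
rewrite /c p'E mulrBl coefB coefCM coefB coefCM -mulr_natr /=.
have -> : ((q^`() * q ^+ m)`_m.-1)`_k = m%:R * ((q ^+ m.+1)`_m)`_k / m.+1%:R.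
  by rewrite -q'E mulrAC divff ?mul1r.
have m_neq0 : (m%:R : F) != 0 by rewrite -(prednK m1).
by rewrite exprS; field; rewrite nat1r natS_neq0 expf_neq0 // alpha_neq0 m_neq0.
Qed.

End FiniteLagrange.

Section Truncation.
Variables (F : fieldType) (B : nat).

Definition trunc (a : ps F) : {poly F} := \poly_(i < B) a i.
Definition trunc2 (P : ps2 F) : {poly {poly F}} := \poly_(j < B) \poly_(i < B) P i j.

Definition coincide (a : ps F) (x : {poly F}) := forall i, (i < B)%N -> x`_i = a i.
Definition coincide2 (P : ps2 F) (r : {poly {poly F}}) :=
  forall i j, (i < B)%N -> (j < B)%N -> r`_j`_i = P i j.

Lemma coincide_trunc a : coincide a (trunc a).
Proof. by move=> i iB; rewrite coef_poly iB. Qed.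

Lemma coincide2_trunc P : coincide2 P (trunc2 P).
Proof. by move=> i j iB jB; rewrite coef_poly jB coef_poly iB. Qed.

Lemma coincide_mul a b x y : coincide a x -> coincide b y -> coincide (ps_mul a b) (x * y).
Proof.
move=> ax ay i iB; rewrite coefM; apply: eq_bigr => -[k ki] _ /=.
by rewrite ax ?ay //; lia.
Qed.

Lemma coincide_pow a x m : coincide a x -> coincide (ps_pow a m) (x ^+ m).
Proof.
move=> ax; elim: m => [|m IH]; last by rewrite exprS; apply: coincide_mul.
by move=> i _; rewrite expr0 coef1 /ps_one; case: i.
Qed.

Lemma coincide2_one : coincide2 (@ps2_one F) 1.
Proof.
move=> i [|j] _ _; last by rewrite coef1 coef0 /ps2_one andbF.
by rewrite !coef1 /ps2_one andbT; case: i.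
Qed.

Lemma coincide2_mul P Q r s :
  coincide2 P r -> coincide2 Q s -> coincide2 (ps2_mul P Q) (r * s).
Proof.
move=> Pr Qs i j iB jB; rewrite coefM coef_sum /ps2_mul.
under eq_bigr do rewrite coefM.
rewrite exchange_big /=; apply: eq_bigr => -[a ai] _; apply: eq_bigr => -[b bj] _ /=.
by rewrite Pr ?Qs //; lia.
Qed.

Lemma coincide2_pow P r m : coincide2 P r -> coincide2 (ps2_pow P m) (r ^+ m).
Proof.
move=> Pr; elim: m => [|m IH]; first exact: coincide2_one.
by rewrite exprS; apply: coincide2_mul.
Qed.

Lemma coincide2_sub P Q r s :
  coincide2 P r -> coincide2 Q s -> coincide2 (ps2_sub P Q) (r - s).
Proof. by move=> Pr Qs i j iB jB; rewrite !coefB Pr ?Qs. Qed.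

Lemma coincide2_cy (c : F) : coincide2 (ps2_cy c) ((c%:P)%:P * 'X).
Proof.
move=> i j _ _; rewrite coefCM coefX /ps2_cy.
by case: j => [|[|j]] /=; rewrite ?mulr0 ?mulr1 ?coef0 ?coefC ?andbF //; case: i.
Qed.

Lemma coef_horner_coincide P phi p f i :
  coincide2 P p -> coincide phi f -> 'X %| f -> (i < B)%N ->
  (p.[f])`_i = ps2_subst P phi i.
Proof.
move=> Pp phif Xf iB; rewrite coef_horner_Xdvd //; apply: eq_bigr => -[j ji] _ /=.
apply: coincide_mul => //; last exact: coincide_pow.
by move=> i' i'B; apply: Pp; lia.
Qed.

End Truncation.

Lemma coincide2_leq (F : fieldType) B B' (P : ps2 F) r :
  (B' <= B)%N -> coincide2 B P r -> coincide2 B' P r.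
Proof. by move=> B'B Pr i j iB' jB'; apply: Pr; lia. Qed.

Lemma coincide2_deriv (F : fieldType) B (P : ps2 F) r :
  coincide2 B.+1 P r -> coincide2 B (ps2_dy P) r^`().
Proof. by move=> Pr i j iB jB; rewrite coef_deriv coefMn Pr //; lia. Qed.

Lemma trunc_lagrange_hyps (F : fieldType) B n (P : ps2 F) (phi : ps F) alpha :
  phi 0%N = 0 -> (forall i, ps2_subst P phi i = 0) -> P 0%N 1%N = alpha ->
  (n < B)%N -> (1 < B)%N ->
  [/\ 'X %| trunc B phi, 'X^(n.+1) %| (trunc2 B P).[trunc B phi]
    & (trunc2 B P)`_1`_0 = alpha].
Proof.
move=> phi0 subst0 P01 nB B1.
have Xf : 'X %| trunc B phi by rewrite dvdpX_coef0 coincide_trunc ?phi0 //; lia.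
split=> //; last by rewrite coincide2_trunc //; lia.
apply: dvdp_trans (dvdp_exp2l _ nB) _; apply/dvdp_XnP => i iB.
by rewrite (coef_horner_coincide (coincide2_trunc P) (coincide_trunc phi) Xf iB).
Qed.

Theorem corollary3p2 (F : fieldType) (P : ps2 F) (phi : ps F) (alpha : F) :
  phi 0%N = 0 ->
  (forall n, ps2_subst P phi n = 0) ->
  ps2_dy P 0%N 0%N = alpha ->
  alpha != 0 ->
  tadic_sum_from1
    (fun m => ps_scale (alpha ^+ m.+1)^-1
       (ps2_coefy m.-1
          (ps2_mul (ps2_dy P) (ps2_pow (ps2_sub (ps2_cy alpha) P) m))))
    phi
  /\
  ([pchar F] =i pred0 ->
   tadic_sum_from1
     (fun m => ps_scale (m%:R * alpha ^+ m)^-1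
        (ps2_coefy m.-1 (ps2_pow (ps2_sub (ps2_cy alpha) P) m)))
     phi).
Proof.
move=> phi0 subst0 dy00 alpha_neq0.
have P01 : P 0%N 1%N = alpha by rewrite -dy00 /ps2_dy mulr1n.
have coincide_P N n : coincide2 (N + n).+1 P (trunc2 (N + n).+2 P).
  by apply: coincide2_leq (coincide2_trunc P).
have coincide_q N n : coincide2 (N + n).+1 (ps2_sub (ps2_cy alpha) P)
                ((alpha%:P)%:P * 'X - trunc2 (N + n).+2 P).
  exact: coincide2_sub (coincide2_cy (B := (N + n).+1) alpha) (coincide_P N n).
split=> [|F0] n; exists (3 * n + 2)%N => N Nn k kn.
all: have [Xf pf p10] := @trunc_lagrange_hyps F (N + n).+2 n P phi alpha
                           phi0 subst0 P01 ltac:(lia) ltac:(lia).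
all: rewrite -(coincide_trunc phi (_ : k < (N + n).+2)%N); last lia.
- rewrite -(lagrange_coef Xf pf p10 alpha_neq0 Nn kn).
  apply: eq_big_nat => m /andP[m1 mN]; congr (_ * _); symmetry.
  apply: (coincide2_mul (coincide2_deriv (coincide2_trunc P))
                        (coincide2_pow m (coincide_q N n))); lia.
- rewrite -(lagrange_coef_pchar0 Xf pf p10 alpha_neq0 Nn F0 kn).
  apply: eq_big_nat => m /andP[m1 mN]; congr (_ * _); symmetry.
  apply: (coincide2_pow m (coincide_q N n)); lia.
Qed.
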